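(* Every 10-dimensional filiform Lie algebra over $\mathbb{K}$ admits a basis $\{X_0,\dots,X_9\}$ in which the bracket is given by the family $F_{10}$ below, for some parameters $a_1,a_2,a_4,a_5,a_7,a_8,\dots,a_{15}\in\mathbb{K}$ satisfying $a_1(2a_2+7a_4+7a_7)=0$, $3a_4^2+3a_4a_7-2a_2a_7=0$, and $a_1(2a_9+5a_{11})-2a_2a_{10}+a_4(7a_8-2a_{10})+a_7(-3a_5+2a_8-7a_{10})=0$.
   Context: $\mathbb{K}$ is algebraically closed of characteristic $0$; filiform means nilpotent of nilindex $\dim-1$. The family $F_{10}$: $\mu(X_0,X_i)=X_{i+1}$ ($1\le i\le 8$), $\mu(X_2,X_7)=a_1X_9$, $\mu(X_1,X_7)=a_1X_8+a_2X_9$, $\mu(X_3,X_6)=-a_1X_9$, $\mu(X_2,X_6)=a_4X_9$, $\mu(X_1,X_6)=a_1X_7+(a_2+a_4)X_8+a_5X_9$, $\mu(X_4,X_5)=a_1X_9$, $\mu(X_3,X_5)=a_7X_9$, $\mu(X_2,X_5)=(a_4+a_7)X_8+a_8X_9$, $\mu(X_1,X_5)=a_1X_6+(a_2+2a_4+a_7)X_7+(a_5+a_8)X_8+a_9X_9$, $\mu(X_3,X_4)=a_7X_8+a_{10}X_9$, $\mu(X_2,X_4)=(a_4+2a_7)X_7+(a_8+a_{10})X_8+a_{11}X_9$, $\mu(X_1,X_4)=a_1X_5+(a_2+3a_4+3a_7)X_6+(a_5+2a_8+a_{10})X_7+(a_9+a_{11})X_8+a_{12}X_9$, $\mu(X_2,X_3)=(a_4+2a_7)X_6+(a_8+a_{10})X_7+a_{11}X_8+a_{13}X_9$,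 $\mu(X_1,X_3)=a_1X_4+(a_2+4a_4+5a_7)X_5+(a_5+3a_8+2a_{10})X_6+(a_9+2a_{11})X_7+(a_{12}+a_{13})X_8+a_{14}X_9$, $\mu(X_1,X_2)=a_1X_3+(a_2+4a_4+5a_7)X_4+(a_5+3a_8+2a_{10})X_5+(a_9+2a_{11})X_6+(a_{12}+a_{13})X_7+a_{14}X_8+a_{15}X_9$, all other brackets $\mu(X_i,X_j)$ ($i<j$) zero. *)

(* Lie algebras of dimension 10 over K are represented by
   structure constants on the standard basis of K^10 (row vectors 'rV[K]_10). *)
From HB Require Import structures.
From mathcomp Require Import all_boot all_order all_algebra.
Set Implicit Arguments. Unset Strict Implicit. Unset Printing Implicit Defensive.
Import GRing.Theory.
Local Open Scope ring_scope.

(* structure constants: c i j = [e_i, e_j] (coordinate row vector) *)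
Definition sconst (K : fieldType) := 'I_10 -> 'I_10 -> 'rV[K]_10.

Definition br (K : fieldType) (c : sconst K) (u v : 'rV[K]_10) : 'rV[K]_10 :=
  \sum_(i < 10) \sum_(j < 10) (u 0 i * v 0 j) *: c i j.

Definition ebas (K : fieldType) (i : 'I_10) : 'rV[K]_10 := delta_mx 0 i.

(* Lie algebra axioms: alternating on the basis (hence everywhere by bilinearity),
   antisymmetric, Jacobi identity on basis vectors (hence everywhere). *)
Definition is_lie (K : fieldType) (c : sconst K) : Prop :=
  (forall i, c i i = 0) /\ (forall i j, c i j = - c j i) /\
  (forall i j k, br c (ebas K i) (br c (ebas K j) (ebas K k))
               + br c (ebas K j) (br c (ebas K k) (ebas K i))
               + br c (ebas K k) (br c (ebas K i) (ebas K j)) = 0).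

(* [g, V] as a subspace (row space of a square matrix) *)
Definition brsp (K : fieldType) (c : sconst K) (V : 'M[K]_10) : 'M[K]_10 :=
  (\sum_(i < 10) \sum_(j < 10) <<br c (ebas K i) (row j V)>>)%MS.

(* lower central series: lcs c k = C^{k+1} g, with C^1 g = g, C^{k+1} g = [g, C^k g] *)
Definition lcs (K : fieldType) (c : sconst K) (k : nat) : 'M[K]_10 :=
  iter k (brsp c) 1%:M.

(* filiform (dim 10): nilpotent of nilindex 9, i.e. C^9 g <> 0 and C^10 g = 0 *)
Definition filiform10 (K : fieldType) (c : sconst K) : Prop :=
  lcs c 8 != 0 /\ lcs c 9 = 0.

Definition ev (K : fieldType) (k : nat) : 'rV[K]_10 := delta_mx 0 (inord k).

(* coordinates of mu(X_i, X_j) (i < j) in the basis X_0..X_9, for the family F_10 *)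
Definition F10 (K : fieldType) (a : nat -> K) (i j : 'I_10) : 'rV[K]_10 :=
  let e := ev K in
  match nat_of_ord i, nat_of_ord j with
  | 0, 1 => e 2 | 0, 2 => e 3 | 0, 3 => e 4 | 0, 4 => e 5
  | 0, 5 => e 6 | 0, 6 => e 7 | 0, 7 => e 8 | 0, 8 => e 9
  | 2, 7 => a 1%N *: e 9
  | 1, 7 => a 1%N *: e 8 + a 2%N *: e 9
  | 3, 6 => - a 1%N *: e 9
  | 2, 6 => a 4%N *: e 9
  | 1, 6 => a 1%N *: e 7 + (a 2%N + a 4%N) *: e 8 + a 5%N *: e 9
  | 4, 5 => a 1%N *: e 9
  | 3, 5 => a 7%N *: e 9
  | 2, 5 => (a 4%N + a 7%N) *: e 8 + a 8%N *: e 9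
  | 1, 5 => a 1%N *: e 6 + (a 2%N + 2 * a 4%N + a 7%N) *: e 7 + (a 5%N + a 8%N) *: e 8
            + a 9%N *: e 9
  | 3, 4 => a 7%N *: e 8 + a 10%N *: e 9
  | 2, 4 => (a 4%N + 2 * a 7%N) *: e 7 + (a 8%N + a 10%N) *: e 8 + a 11%N *: e 9
  | 1, 4 => a 1%N *: e 5 + (a 2%N + 3 * a 4%N + 3 * a 7%N) *: e 6
            + (a 5%N + 2 * a 8%N + a 10%N) *: e 7 + (a 9%N + a 11%N) *: e 8 + a 12%N *: e 9
  | 2, 3 => (a 4%N + 2 * a 7%N) *: e 6 + (a 8%N + a 10%N) *: e 7 + a 11%N *: e 8
            + a 13%N *: e 9
  | 1, 3 => a 1%N *: e 4 + (a 2%N + 4 * a 4%N + 5 * a 7%N) *: e 5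
            + (a 5%N + 3 * a 8%N + 2 * a 10%N) *: e 6 + (a 9%N + 2 * a 11%N) *: e 7
            + (a 12%N + a 13%N) *: e 8 + a 14%N *: e 9
  | 1, 2 => a 1%N *: e 3 + (a 2%N + 4 * a 4%N + 5 * a 7%N) *: e 4
            + (a 5%N + 3 * a 8%N + 2 * a 10%N) *: e 5 + (a 9%N + 2 * a 11%N) *: e 6
            + (a 12%N + a 13%N) *: e 7 + a 14%N *: e 8 + a 15%N *: e 9
  | _, _ => 0
  end.

(* A filiform algebra has a basis X_0, ..., X_9 adapted to its lower central
   series: C^k g is spanned by X_k, ..., X_9 for k >= 2.  Choose X_0 generically, so that each
   [X_0, X_k] has a nonzero X_{k+1}-component (finitely many hyperplanes to avoid, K being
   infinite), and set X_{k+1} := [X_0, X_k]: then ad X_0 is the shift and [X_i, X_j] lies in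
   the span of X_{i+j}, ..., X_9; replacing X_1 by X_1 - b X_0 also kills the X_9-component of
   [X_1, X_8].  As ad X_0 is a derivation, the coordinates satisfy
   c_{ij}^t = c_{i+1,j}^{t+1} + c_{i,j+1}^{t+1}, so every structure constant is a binomial
   combination of the X_9-components of the brackets.  The remaining Jacobi identities are then
   polynomial equations in these; five of them give [X_3, X_6] = -[X_2, X_7] = -[X_4, X_5] on
   X_9 and the three stated relations. *)

From HB Require Import structures.
From mathcomp Require Import all_boot all_order all_algebra.
From mathcomp Require Import ring zify.
Set Implicit Arguments. Unset Strict Implicit. Unset Printing Implicit Defensive.
Import GRing.Theory.
Local Open Scope ring_scope.

Definition vanish_below (K : fieldType) (m : nat) (v : 'rV[K]_10) :=
  forall t : 'I_10, (t < m)%N -> v 0 t = 0.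

Lemma inord_eq10 (t k : nat) : (t < 10)%N -> (k < 10)%N -> (@inord 9 t == inord k) = (t == k).
Proof.
move=> ht hk; apply/eqP/eqP => [|-> //].
by move/(congr1 (@nat_of_ord 10)); rewrite !inordK.
Qed.

Lemma eq_inord10 (t : 'I_10) k : (k < 10)%N -> (t == inord k) = (val t == k).
Proof. by move=> hk; rewrite -(inord_eq10 (ltn_ord t) hk) inord_val. Qed.

Lemma inord0_10 : inord 0 = 0 :> 'I_10.
Proof. by apply/val_inj; rewrite /= inordK. Qed.

Lemma inord1_10 : inord 1 = 1 :> 'I_10.
Proof. by apply/val_inj; rewrite /= inordK. Qed.

Lemma ord10_lt2 (a : 'I_10) : (a < 2)%N -> a = 0 \/ a = 1.
Proof. by case: a => [[|[|//]] ha] _; [left | right]; apply: val_inj. Qed.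

Section VanishBelow.
Variable K : fieldType.
Implicit Types (u v : 'rV[K]_10).

Lemma vanish_belowW m n v : (m <= n)%N -> vanish_below n v -> vanish_below m v.
Proof. by move=> hmn h t ht; apply: h; exact: leq_trans ht hmn. Qed.

Lemma vanish_belowD m u v : vanish_below m u -> vanish_below m v -> vanish_below m (u + v).
Proof. by move=> hu hv t ht; rewrite mxE hu // hv // addr0. Qed.

Lemma vanish_belowZ m a v : vanish_below m v -> vanish_below m (a *: v).
Proof. by move=> hv t ht; rewrite mxE hv // mulr0. Qed.

Lemma vanish_belowN m v : vanish_below m v -> vanish_below m (- v).
Proof. by move=> hv t ht; rewrite mxE hv // oppr0. Qed.

Lemma vanish_below0 m : vanish_below m (0 : 'rV[K]_10).
Proof. by move=> t _; rewrite mxE. Qed.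

Lemma vanish_below10 v : vanish_below 10 v -> v = 0.
Proof. by move=> h; apply/rowP => t; rewrite mxE h. Qed.

Lemma vanish_belowS m v : (m < 10)%N -> vanish_below m v -> v 0 (inord m) = 0 ->
  vanish_below m.+1 v.
Proof.
move=> hm hv h0 t; rewrite ltnS leq_eqVlt => /orP[/eqP e|]; last exact: hv.
by have -> : t = inord m by apply/val_inj; rewrite /= inordK // -e.
Qed.

End VanishBelow.

Section Bracket.
Variable K : fieldType.
Implicit Types (c : sconst K) (u v w : 'rV[K]_10).

Lemma ebas_coord i t : ebas K i 0 t = (t == i)%:R.
Proof. by rewrite /ebas mxE eqxx. Qed.

Lemma br_linearl c w : linear (br c ^~ w).
Proof.
move=> a x y; rewrite /br scaler_sumr -big_split; apply: eq_bigr => i _.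
rewrite scaler_sumr -big_split; apply: eq_bigr => j _.
by rewrite !mxE scalerA /= -scalerDl; congr (_ *: _); ring.
Qed.

Lemma br_linearr c u : linear (br c u).
Proof.
move=> a x y; rewrite /br scaler_sumr -big_split; apply: eq_bigr => i _.
rewrite scaler_sumr -big_split; apply: eq_bigr => j _.
by rewrite !mxE scalerA /= -scalerDl; congr (_ *: _); ring.
Qed.

Lemma brZDl c a x y w : br c (a *: x + y) w = a *: br c x w + br c y w.
Proof. exact: br_linearl. Qed.

Lemma brZDr c u a x y : br c u (a *: x + y) = a *: br c u x + br c u y.
Proof. exact: br_linearr. Qed.

Section LinearRow.
Variable f : 'rV[K]_10 -> 'rV[K]_10.
Hypothesis f_linear : linear f.

Lemma linear_rV0 : f 0 = 0.
Proof.
have := f_linear (-1) 0 0; rewrite scaler0 addr0 scaleN1r => h.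
by rewrite {1}h addNr.
Qed.

Lemma linear_rV_sum (I : finType) (a : I -> K) (X : I -> 'rV[K]_10) :
  f (\sum_i a i *: X i) = \sum_i a i *: f (X i).
Proof.
elim/big_rec2: _ => [|i y1 y2 _ <-]; first exact: linear_rV0.
exact: f_linear.
Qed.

Lemma linear_rV_ebas u : f u = \sum_i u 0 i *: f (ebas K i).
Proof. by rewrite {1}(row_sum_delta u) linear_rV_sum. Qed.

End LinearRow.

Lemma br_ebasl c i v : br c (ebas K i) v = \sum_j v 0 j *: c i j.
Proof.
rewrite /br (bigD1 i) //= [X in _ + X]big1 ?addr0 => [|k hk]; last first.
  by apply: big1 => j _; rewrite ebas_coord (negbTE hk) mul0r scale0r.
by apply: eq_bigr => j _; rewrite ebas_coord eqxx mul1r.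
Qed.

Lemma br_ebas c i j : br c (ebas K i) (ebas K j) = c i j.
Proof.
rewrite br_ebasl (bigD1 j) //= big1 ?addr0 => [|k hk].
  by rewrite ebas_coord eqxx scale1r.
by rewrite ebas_coord (negbTE hk) scale0r.
Qed.

Lemma br_ebasl_coord c i v t : br c (ebas K i) v 0 t = \sum_j v 0 j * c i j 0 t.
Proof. by rewrite br_ebasl summxE; apply: eq_bigr => j _; rewrite mxE. Qed.

Lemma br0r c u : br c u 0 = 0.
Proof. exact: linear_rV0 (br_linearr c u). Qed.

Lemma brNr c u v : br c u (- v) = - br c u v.
Proof. by have := br_linearr c u (-1) v 0; rewrite br0r !addr0 !scaleN1r. Qed.

Lemma br_sum2 c (a b : 'I_10 -> K) (X Y : 'I_10 -> 'rV[K]_10) :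
  br c (\sum_i a i *: X i) (\sum_j b j *: Y j) = \sum_i \sum_j (a i * b j) *: br c (X i) (Y j).
Proof.
rewrite (linear_rV_sum (br_linearl c _)); apply: eq_bigr => i _.
rewrite (linear_rV_sum (br_linearr c _)) scaler_sumr; apply: eq_bigr => j _.
by rewrite scalerA.
Qed.

Lemma br_vanish_below c m u v : (forall a b, v 0 b != 0 -> vanish_below m (c a b)) ->
  vanish_below m (br c u v).
Proof.
move=> h t ht; rewrite summxE big1 // => a _; rewrite summxE big1 // => b _.
rewrite mxE; have [hb|hb] := eqVneq (v 0 b) 0; first by rewrite hb mulr0 mul0r.
by rewrite (h a b hb) // mulr0.
Qed.

Definition rebase c (P : 'M[K]_10) : sconst K :=
  fun i j => br c (row i P) (row j P) *m invmx P.

Lemma br_rebase c P u v : br (rebase c P) u v = br c (u *m P) (v *m P) *m invmx P.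
Proof.
transitivity (\sum_i \sum_j (u 0 i * v 0 j) *: rebase c P i j) => //.
rewrite (mulmx_sum_row u) (mulmx_sum_row v) br_sum2 mulmx_suml; apply: eq_bigr => i _.
by rewrite mulmx_suml; apply: eq_bigr => j _; rewrite /rebase scalemxAl.
Qed.

Lemma rebaseK c P i j : P \in unitmx -> br c (row i P) (row j P) = rebase c P i j *m P.
Proof. by move=> uP; rewrite /rebase mulmxKV. Qed.

Lemma br_rebase_row c P (R : 'M[K]_10) i j : P \in unitmx ->
  br c (row i (R *m P)) (row j (R *m P)) = br (rebase c P) (row i R) (row j R) *m P.
Proof. by move=> uP; rewrite br_rebase mulmxKV // !row_mul. Qed.

End Bracket.

Section LieAlgebra.
Variables (K : fieldType) (c : sconst K).
Hypothesis c_lie : is_lie c.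
Implicit Types (u v w : 'rV[K]_10).

Lemma lie_diag i : c i i = 0.
Proof. by case: c_lie. Qed.

Lemma lie_anti i j : c i j = - c j i.
Proof. by case: c_lie => _ []. Qed.

Lemma br_anti u v : br c u v = - br c v u.
Proof.
rewrite /br exchange_big -sumrN; apply: eq_bigr => i _; rewrite -sumrN.
by apply: eq_bigr => j _; rewrite lie_anti scalerN mulrC.
Qed.

Lemma br_alt u : (2 : K) != 0 -> br c u u = 0.
Proof.
move=> two; have : (2 : K) *: br c u u = 0 by rewrite scaler_nat mulr2n {1}br_anti addNr.
by move/eqP; rewrite scaler_eq0 (negbTE two) => /eqP.
Qed.

Let jacobiator u v w := br c u (br c v w) + br c v (br c w u) + br c w (br c u v).

Let jacobiator_rot u v w : jacobiator u v w = jacobiator v w u.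
Proof. by apply/rowP => k; rewrite /jacobiator !mxE; ring. Qed.

Let jacobiator_linear v w : linear (fun u => jacobiator u v w).
Proof.
move=> a x y; rewrite /jacobiator /= !brZDl !brZDr.
by apply/rowP => k; rewrite !mxE; ring.
Qed.

Lemma jacobi u v w : br c u (br c v w) + br c v (br c w u) + br c w (br c u v) = 0.
Proof.
rewrite -/(jacobiator u v w) (linear_rV_ebas (jacobiator_linear v w)) big1 // => i _.
rewrite jacobiator_rot (linear_rV_ebas (jacobiator_linear _ _)) big1 ?scaler0 // => j _.
rewrite jacobiator_rot (linear_rV_ebas (jacobiator_linear _ _)) big1 ?scaler0 // => k _.
by rewrite jacobiator_rot /jacobiator (proj2 (proj2 c_lie)) scaler0.
Qed.

Lemma rebase_lie P : (2 : K) != 0 -> P \in unitmx -> is_lie (rebase c P).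
Proof.
move=> two uP; split; [|split].
- by move=> i; rewrite /rebase br_alt // mul0mx.
- by move=> i j; rewrite /rebase br_anti mulNmx.
- move=> i j k; rewrite !br_rebase /ebas -!rowE !mulmxKV // -!mulmxDl.
  by rewrite jacobi mul0mx.
Qed.

End LieAlgebra.

Section MatrixRows.
Variables (K : fieldType) (m n : nat).
Implicit Types (A : 'M[K]_(m, n)) (x v : 'rV[K]_n).

Lemma sub_adds_row A x v : (v <= A + x)%MS -> exists l w, (w <= A)%MS /\ v = l *: x + w.
Proof.
case/sub_addsmxP=> [[u1 u2]] /= ->; exists (u2 0 0), (u1 *m A); split; first exact: submxMl.
by rewrite addrC {1}(mx11_scalar u2) mul_scalar_mx.
Qed.

Lemma exists_delta_notin A : (\rank A < n)%N -> exists a, ~~ ((delta_mx 0 a : 'rV[K]_n) <= A)%MS.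
Proof.
move=> hr; apply/existsP; apply: contraLR hr; rewrite negb_exists -leqNgt => /forallP h.
have : (1%:M <= A)%MS by apply/row_subP => i; rewrite row1; have := h i; rewrite negbK.
by move/mxrankS; rewrite mxrank1.
Qed.

Lemma mxrank_adds_row A x : ~~ (x <= A)%MS -> \rank (A + x)%MS = (\rank A).+1.
Proof.
move=> hx; have := mxrank_sum_cap A x.
have hx1 : \rank x = 1%N.
  apply/eqP; rewrite eqn_leq rank_leq_row lt0n mxrank_eq0; apply: contraNneq hx => ->.
  exact: sub0mx.
suff -> : \rank (A :&: x)%MS = 0%N by rewrite addn0 hx1 addn1.
have hc := capmxSr A x.
have hne : \rank (A :&: x)%MS != 1%N.
  apply: contraNneq hx => e; apply: submx_trans (capmxSl A x).
  by rewrite -(mxrank_leqif_sup hc).2 e hx1.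
by move: (mxrankS hc) hne; rewrite hx1; case: (\rank _) => [|[|]].
Qed.

End MatrixRows.

Section LowerCentralSeries.
Variables (K : fieldType) (c : sconst K).
Hypothesis c_lie : is_lie c.

Lemma br_sub_brsp (A : 'M[K]_10) u w : (w <= A)%MS -> (br c u w <= brsp c A)%MS.
Proof.
case/submxP=> x ->; rewrite (row_sum_delta u) mulmx_sum_row br_sum2.
apply: summx_sub => i _; apply: summx_sub => j _; apply: scalemx_sub.
apply: (sumsmx_sup i) => //; apply: (sumsmx_sup j) => //.
by rewrite genmxE.
Qed.

Lemma brsp_subP (A B : 'M[K]_10) :
  (forall i j, (br c (ebas K i) (row j A) <= B)%MS) -> (brsp c A <= B)%MS.
Proof.
move=> h; apply/sumsmx_subP => i _; apply/sumsmx_subP => j _.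
by rewrite genmxE h.
Qed.

Lemma brspS (A B : 'M[K]_10) : (A <= B)%MS -> (brsp c A <= brsp c B)%MS.
Proof.
move=> hAB; apply: brsp_subP => i j; apply: br_sub_brsp.
exact: submx_trans (row_sub j A) hAB.
Qed.

Lemma lcsS k : lcs c k.+1 = brsp c (lcs c k).
Proof. by []. Qed.

Lemma lcsS_sub k : (lcs c k.+1 <= lcs c k)%MS.
Proof. by elim: k => [|k IH]; [exact: submx1 | exact: brspS]. Qed.

Lemma lcs_stationary m : (lcs c m <= lcs c m.+1)%MS ->
  forall d, (lcs c (d + m) <= lcs c (d + m).+1)%MS.
Proof. by move=> h; elim=> [|d IH] //; rewrite addSn; apply: brspS. Qed.

Hypothesis c_fil : filiform10 c.

Lemma lcs_strict m : (m <= 8)%N -> ~~ (lcs c m <= lcs c m.+1)%MS.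
Proof.
move=> hm; apply/negP => h; case: c_fil => h8 h9.
have := lcs_stationary h (8 - m); rewrite subnK // h9 submx0 => h0.
by rewrite (eqP h0) eqxx in h8.
Qed.

Lemma lcs_rank_lt m : (m <= 8)%N -> (\rank (lcs c m.+1) < \rank (lcs c m))%N.
Proof.
move=> hm; have : (lcs c m.+1 < lcs c m)%MS by rewrite ltmxE lcsS_sub lcs_strict.
by rewrite ltmxErank => /andP[].
Qed.

(* If [g, g] had codimension one, g = K e_a + [g, g] would give [g, g] = [g, [g, g]]. *)
Lemma lcs1_rank : (\rank (lcs c 1) <= 8)%N.
Proof.
rewrite leqNgt; apply/negP => h9.
have hr : (\rank (lcs c 1) < 10)%N by have := lcs_rank_lt (isT : (0 <= 8)%N); rewrite mxrank1.
have [a ha] := exists_delta_notin hr.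
have hfull : row_full (lcs c 1 + ebas K a)%MS by rewrite /row_full mxrank_adds_row //; lia.
have dec v : exists l w, (w <= lcs c 1)%MS /\ v = l *: ebas K a + w.
  by apply: sub_adds_row; apply: submx_full.
have : (lcs c 1 <= lcs c 2)%MS.
  apply: brsp_subP => i j; rewrite row1 -[delta_mx 0 j]/(ebas K j).
  have [l1 [w1 [hw1 ->]]] := dec (ebas K i).
  have [l2 [w2 [hw2 ->]]] := dec (ebas K j).
  rewrite brZDl !brZDr br_ebas lie_diag // scaler0 add0r.
  rewrite addmx_sub ?scalemx_sub ?br_sub_brsp //.
  by rewrite addmx_sub ?br_sub_brsp // scalemx_sub // br_anti // eqmx_opp br_sub_brsp.
by rewrite (negbTE (lcs_strict (isT : (1 <= 8)%N))).
Qed.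

Lemma lcs_rank m : (1 <= m <= 9)%N -> \rank (lcs c m) = (9 - m)%N.
Proof.
move=> hm; apply/eqP; rewrite eqn_leq; apply/andP; split.
  elim: m hm => [//|m IH] /andP[hm1 hm9].
  have [->|hm0] := eqVneq m 0%N; first exact: lcs1_rank.
  have := @lcs_rank_lt m; have := IH; rewrite lt0n hm0 /=; lia.
suff ge d : (d <= 9)%N -> (d <= \rank (lcs c (9 - d)))%N.
  by have := ge (9 - m)%N; rewrite subKn; lia.
elim: d => [//|d IH hd].
have := @lcs_rank_lt (8 - d)%N; have := IH; have -> : (9 - d.+1 = 8 - d)%N by lia.
have -> : ((8 - d).+1 = 9 - d)%N by lia.
lia.
Qed.

End LowerCentralSeries.

Definition col_filtered (K : fieldType) (c : sconst K) :=
  forall a b : 'I_10, (1 <= b)%N -> vanish_below b.+1 (c a b).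

Definition next_coord_nonzero (K : fieldType) (c : sconst K) :=
  forall k : 'I_10, (1 <= k <= 8)%N -> exists a, c a k 0 (inord k.+1) != 0.

Section GradedBasis.
Variables (K : fieldType) (c : sconst K).
Hypotheses (c_lie : is_lie c) (c_fil : filiform10 c).

(* [lcs c k] is C^{k+1} g, so [lcs_rep k] lies in C^k g but not in C^{k+1} g. *)
Definition lcs_rep (k : nat) : 'rV[K]_10 :=
  row (odflt ord0 [pick r | ~~ (row r (lcs c k.-1) <= lcs c k)%MS]) (lcs c k.-1).

Definition gen1 : 'I_10 := odflt ord0 [pick a | ~~ (ebas K a <= lcs c 1)%MS].

Definition gen0 : 'I_10 := odflt ord0 [pick b | ~~ (ebas K b <= lcs c 1 + ebas K gen1)%MS].

Definition graded_row (i : 'I_10) : 'rV[K]_10 :=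
  match nat_of_ord i with 0 => ebas K gen0 | 1 => ebas K gen1 | k => lcs_rep k end.

Definition graded_basis : 'M[K]_10 := \matrix_i graded_row i.

Lemma lcs_rep_sub k : (lcs_rep k <= lcs c k.-1)%MS.
Proof. exact: row_sub. Qed.

Lemma lcs_rep_notin k : (2 <= k <= 9)%N -> ~~ (lcs_rep k <= lcs c k)%MS.
Proof.
move=> hk; rewrite /lcs_rep; case: pickP => [r //|h].
have : (lcs c k.-1 <= lcs c k)%MS by apply/row_subP => r; apply: negbFE (h r).
have -> : k = (k.-1).+1 by lia.
by rewrite (negbTE (lcs_strict c_fil _)) //; lia.
Qed.

Lemma gen1_notin : ~~ (ebas K gen1 <= lcs c 1)%MS.
Proof.
rewrite /gen1; case: pickP => [a //|h].
have hr : (\rank (lcs c 1) < 10)%N by rewrite lcs_rank.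
have [a ha] := exists_delta_notin hr.
by have := h a; rewrite ha.
Qed.

Lemma gen0_notin : ~~ (ebas K gen0 <= lcs c 1 + ebas K gen1)%MS.
Proof.
rewrite /gen0; case: pickP => [b //|h].
have hr : (\rank (lcs c 1 + ebas K gen1)%MS < 10)%N.
  by rewrite mxrank_adds_row ?gen1_notin // lcs_rank.
have [b hb] := exists_delta_notin hr; by have := h b; rewrite hb.
Qed.

Lemma row_graded_basis (k : 'I_10) : (2 <= k)%N -> row k graded_basis = lcs_rep k.
Proof. by rewrite rowK /graded_row; case: k => [[|[|k]]]. Qed.

Lemma lcs_split k v : (2 <= k <= 9)%N -> (v <= lcs c k.-1)%MS ->
  exists l w, (w <= lcs c k)%MS /\ v = l *: lcs_rep k + w.
Proof.
move=> hk hv; apply: sub_adds_row.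
have e : k = (k.-1).+1 by lia.
have hs : (lcs c k + lcs_rep k <= lcs c k.-1)%MS.
  by rewrite addsmx_sub lcs_rep_sub andbT {1}e lcsS_sub.
have hr : \rank (lcs c k + lcs_rep k)%MS = \rank (lcs c k.-1).
  rewrite mxrank_adds_row ?lcs_rep_notin // !lcs_rank //; lia.
by apply: submx_trans hv _; rewrite -(mxrank_leqif_sup hs).2 hr.
Qed.

Definition graded_coords m := forall v : 'rV[K]_10,
  (v <= lcs c m.-1)%MS <-> exists l, vanish_below m l /\ v = l *m graded_basis.

Lemma graded_coords10 : graded_coords 10.
Proof.
move=> v; case: c_fil => _; rewrite /= => ->; rewrite submx0; split.
  by move/eqP => ->; exists 0; rewrite mul0mx; split; [exact: vanish_below0|].
by case=> l [hl ->]; rewrite (vanish_below10 hl) mul0mx.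
Qed.

Lemma graded_coords_pred m : (3 <= m <= 10)%N -> graded_coords m -> graded_coords m.-1.
Proof.
move=> hm hD v; set k := m.-1.
have hk : (2 <= k <= 9)%N by rewrite /k; lia.
have em : m = k.+1 by rewrite /k; lia.
have hk10 : (k < 10)%N by lia.
have row_k : ebas K (Ordinal hk10) *m graded_basis = lcs_rep k.
  by rewrite -rowE row_graded_basis //; case/andP: hk.
split.
- move=> hv; have [l [w [hw ->]]] := lcs_split hk hv.
  have [l' [hl' ->]] : exists l', vanish_below m l' /\ w = l' *m graded_basis.
    by apply/hD; rewrite em.
  exists (l' + l *: ebas K (Ordinal hk10)); split.
    apply: vanish_belowD; first by apply: (vanish_belowW _ hl'); lia.
    move=> t ht; rewrite mxE ebas_coord; case: eqP => [e|_]; last by rewrite mulr0.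
    by move: ht; rewrite e /= ltnn.
  by rewrite mulmxDl addrC -scalemxAl row_k.
- case=> l [hl ->].
  set l0 := l 0 (Ordinal hk10) *: ebas K (Ordinal hk10).
  rewrite -(subrK l0 l) mulmxDl addmx_sub //; last first.
    by rewrite -scalemxAl row_k scalemx_sub ?lcs_rep_sub.
  have : ((l - l0) *m graded_basis <= lcs c m.-1)%MS.
    apply/hD; exists (l - l0); split => // t ht; rewrite !mxE eqxx /=.
    case: eqP => [->|ne]; first by rewrite mulr1 subrr.
    rewrite mulr0 subr0; apply: hl.
    have : (t : nat) != k by apply/eqP => e; apply: ne; apply/val_inj.
    by move: ht; rewrite em; lia.
  have sub_k : (lcs c k <= lcs c k.-1)%MS.
    by rewrite -{1}(@prednK k) ?lcsS_sub //; lia.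
  by move/submx_trans; apply; rewrite em.
Qed.

Lemma graded_coordsP m : (2 <= m <= 10)%N -> graded_coords m.
Proof.
move=> hm; have -> : m = (10 - (10 - m))%N by lia.
have : (10 - m <= 8)%N by lia.
elim: (10 - m)%N => [_|d IH hd]; first exact: graded_coords10.
have -> : (10 - d.+1 = (10 - d).-1)%N by lia.
by apply: graded_coords_pred; [lia | apply: IH; lia].
Qed.

Lemma graded_basis_unit : graded_basis \in unitmx.
Proof.
rewrite -row_full_unit.
have hs : (lcs c 1 + ebas K gen1 + ebas K gen0 <= graded_basis)%MS.
  rewrite !addsmx_sub -andbA; apply/and3P; split.
  - apply/row_subP => r.
    have [l [_ ->]] := (graded_coordsP (isT : (2 <= 2 <= 10)%N) (row r (lcs c 1))).1 (row_sub _ _).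
    exact: submxMl.
  - by rewrite (_ : ebas K gen1 = row 1 graded_basis) ?row_sub // rowK.
  - by rewrite (_ : ebas K gen0 = row 0 graded_basis) ?row_sub // rowK.
have := mxrankS hs; rewrite !mxrank_adds_row ?gen0_notin ?gen1_notin // lcs_rank //.
by rewrite /row_full => h; apply/eqP/anti_leq; rewrite h rank_leq_col.
Qed.

Lemma graded_vanish m v : (2 <= m <= 10)%N ->
  (v <= lcs c m.-1)%MS <-> vanish_below m (v *m invmx graded_basis).
Proof.
move=> hm; rewrite (graded_coordsP hm v); split.
  by case=> l [hl ->]; rewrite mulmxK // graded_basis_unit.
by move=> h; exists (v *m invmx graded_basis); rewrite mulmxKV // graded_basis_unit.
Qed.

Local Notation c1 := (rebase c graded_basis).

Lemma brsp_sub_lcs (A : 'M[K]_10) m : (2 <= m <= 10)%N ->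
  (forall u v, (v <= A)%MS ->
     vanish_below m (br c1 (u *m invmx graded_basis) (v *m invmx graded_basis))) ->
  (brsp c A <= lcs c m.-1)%MS.
Proof.
move=> hm h; apply: brsp_subP => i j; apply/(graded_vanish _ hm).
by have := h (ebas K i) _ (row_sub j A); rewrite br_rebase !mulmxKV ?graded_basis_unit.
Qed.

Hypothesis two : (2 : K) != 0.

Lemma graded_lie : is_lie c1.
Proof. exact: rebase_lie c_lie _ two graded_basis_unit. Qed.

Lemma graded_col_ge2 (i j : 'I_10) : (2 <= j)%N -> vanish_below j.+1 (c1 i j).
Proof.
move=> hj; apply/(graded_vanish _ _).1; first by rewrite ltn_ord; lia.
rewrite /= -(@prednK j) ?lcsS; last by lia.
by apply: br_sub_brsp; rewrite row_graded_basis ?lcs_rep_sub.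
Qed.

Lemma graded_col01 : vanish_below 2 (c1 0 1).
Proof. by apply/(graded_vanish (m := 2) _ _).1 => //; apply: br_sub_brsp; exact: submx1. Qed.

Lemma graded_col_filtered : col_filtered c1.
Proof.
move=> a b hb; have [hb2|hb2] := leqP 2 b; first exact: graded_col_ge2.
have [ha2|ha2] := leqP 2 a.
  rewrite (lie_anti graded_lie a); apply: vanish_belowN.
  by apply: (vanish_belowW _ (graded_col_ge2 _ ha2)); lia.
case/ord10_lt2: hb2 hb => -> // _; case/ord10_lt2: ha2 => ->; first exact: graded_col01.
by rewrite (lie_diag graded_lie); exact: vanish_below0.
Qed.

(* Otherwise C^{k+1} g = [g, C^k g] would lie in C^{k+2} g. *)
Lemma graded_next_ge2 (k : 'I_10) : (2 <= k <= 8)%N -> exists a, c1 a k 0 (inord k.+1) != 0.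
Proof.
move=> hk; apply/existsP; rewrite -negb_forall; apply/negP => /forallP h.
have : (lcs c k <= lcs c k.+1)%MS.
  rewrite -{1}(@prednK k) ?lcsS; last by lia.
  apply: (@brsp_sub_lcs _ k.+2); first by lia.
  move=> u v hv; apply: br_vanish_below => a b hb.
  have hbk : (k <= b)%N.
    have hk' : (2 <= k <= 10)%N by lia.
    have hv' := (graded_vanish v hk').1 hv; rewrite leqNgt.
    by apply: contra hb => hbk; rewrite hv' //; lia.
  rewrite leq_eqVlt in hbk; case/orP: hbk => [/eqP eb|hbk].
    have -> : b = k by apply/val_inj.
    apply: vanish_belowS; [lia | apply: graded_col_ge2; lia | exact/eqP/h].
  by apply: (vanish_belowW _ (graded_col_ge2 a _)); lia.
by rewrite (negbTE (lcs_strict c_fil _)) //; lia.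
Qed.

Lemma graded_next01 : c1 0 1 0 (inord 2) != 0.
Proof.
apply/negP => /eqP h.
have h01 : vanish_below 3 (c1 0 1) by apply: vanish_belowS => //; exact: graded_col01.
have : (lcs c 1 <= lcs c 2)%MS.
  apply: (@brsp_sub_lcs _ 3) => // u v _; apply: br_vanish_below => a b _.
  have [hb|hb] := leqP 2 b; first by apply: (vanish_belowW _ (graded_col_ge2 a hb)); lia.
  have [ha|ha] := leqP 2 a.
    rewrite (lie_anti graded_lie a); apply: vanish_belowN.
    by apply: (vanish_belowW _ (graded_col_ge2 b ha)); lia.
  case/ord10_lt2: ha => ->; case/ord10_lt2: hb => ->;
    rewrite ?(lie_diag graded_lie); try exact: vanish_below0; first exact: h01.
  by rewrite (lie_anti graded_lie); exact: vanish_belowN.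
by rewrite (negbTE (lcs_strict c_fil (_ : 1 <= 8)%N)).
Qed.

Lemma graded_next_coord : next_coord_nonzero c1.
Proof.
move=> k hk; have [hk2|] := leqP 2 k; first by apply: graded_next_ge2; lia.
move=> hk2; exists 0; have -> : k = 1 by case/ord10_lt2: hk2 hk => ->.
exact: graded_next01.
Qed.

End GradedBasis.

Lemma graded_basis_exists (K : fieldType) (c : sconst K) :
  is_lie c -> filiform10 c -> (2 : K) != 0 ->
  exists2 Q, Q \in unitmx &
    [/\ is_lie (rebase c Q), col_filtered (rebase c Q) & next_coord_nonzero (rebase c Q)].
Proof.
move=> c_lie c_fil two; exists (graded_basis c); first exact: graded_basis_unit.
by split; [exact: graded_lie | exact: graded_col_filtered | exact: graded_next_coord].
Qed.

Definition shifted (K : fieldType) (c : sconst K) :=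
  forall i : 'I_10, (1 <= i)%N -> c 0 i = if (i < 9)%N then ebas K (inord i.+1) else 0.

Definition weight_filtered (K : fieldType) (c : sconst K) :=
  forall i j : 'I_10, (1 <= i)%N -> (1 <= j)%N -> vanish_below (i + j) (c i j).

Section NatNonroot.
Variable K : fieldType.
Hypothesis K0 : [pchar K] =i pred0.

Lemma natr_inj_pchar0 : injective (fun n : nat => n%:R : K).
Proof.
move=> m n /= e; wlog h : m n e / (m <= n)%N.
  by move=> W; case: (leqP m n) => h; [exact: W | apply/esym/W => //; exact: ltnW].
have : ((n - m)%:R == 0 :> K) by rewrite natrB // e subrr.
by rewrite ((pcharf0P _).1 K0) subn_eq0 => h'; apply/eqP; rewrite eqn_leq h h'.
Qed.

Lemma exists_nat_nonroot (q : {poly K}) : q != 0 -> exists n : nat, q.[n%:R] != 0.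
Proof.
move=> hq; set rs := [seq n%:R | n <- iota 0 (size q)] : seq K.
case: (boolP (all (root q) rs)) => h.
  have := max_poly_roots hq h; rewrite map_inj_uniq ?iota_uniq; last exact: natr_inj_pchar0.
  by rewrite size_map size_iota ltnn => /(_ isT).
by case/allPn: h => x /mapP [n _ ->] hx; exists n.
Qed.

End NatNonroot.

Section ShiftBasis.
Variables (K : fieldType) (c : sconst K).
Hypotheses (c_lie : is_lie c) (K0 : [pchar K] =i pred0).
Hypotheses (c_col : col_filtered c) (c_next : next_coord_nonzero c).

Lemma br_vanish_succ k u v : (1 <= k)%N -> vanish_below k v -> vanish_below k.+1 (br c u v).
Proof.
move=> hk hv; apply: br_vanish_below => a b hb.
have hbk : (k <= b)%N by rewrite leqNgt; apply: contra hb => h; apply/eqP; exact: hv.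
by apply: (vanish_belowW _ (c_col a _)); lia.
Qed.

Definition step_coef (k : nat) (u : 'rV[K]_10) := \sum_a u 0 a * c a (inord k) 0 (inord k.+1).

Lemma br_coord_succ k u v : (1 <= k <= 8)%N -> vanish_below k v ->
  br c u v 0 (inord k.+1) = v 0 (inord k) * step_coef k u.
Proof.
move=> hk hv; rewrite /step_coef summxE mulr_sumr; apply: eq_bigr => a _.
rewrite summxE (bigD1 (inord k)) //= big1 ?addr0 => [|b hb]; first by rewrite mxE; ring.
rewrite mxE; have [hbk|hbk] := leqP b k.
  have hbk' : (b < k)%N.
    rewrite ltn_neqAle hbk andbT; apply: contra hb => /eqP e.
    by apply/eqP/val_inj; rewrite /= inordK //; lia.
  by rewrite hv // mulr0 mul0r.
have hb1 : (1 <= b)%N by lia.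
by rewrite (c_col a hb1) ?mulr0 // inordK //; lia.
Qed.

Definition step_poly (k : nat) : {poly K} := \poly_(a < 10) c (inord a) (inord k) 0 (inord k.+1).

Lemma step_poly_neq0 k : (1 <= k <= 8)%N -> step_poly k != 0.
Proof.
move=> hk; have hk' : (1 <= (inord k : 'I_10) <= 8)%N by rewrite inordK //; lia.
have [a ha] := c_next hk'; rewrite inordK in ha; last by lia.
apply/eqP => /polyP /(_ a).
by rewrite coef_poly ltn_ord coef0 inord_val => /eqP; rewrite (negbTE ha).
Qed.

Definition steps_poly : {poly K} := \prod_(k < 8) step_poly k.+1.

Lemma steps_poly_neq0 : steps_poly != 0.
Proof. by apply/prodf_neq0 => k _; apply: step_poly_neq0; have := ltn_ord k; lia. Qed.

Definition generic_scalar : K := (xchoose (exists_nat_nonroot K0 steps_poly_neq0))%:R.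

(* The X_{k+1}-coefficient of [x, X_k] is a nonzero linear form in x; at x = (1, s, s^2, ...)
   it is (step_poly k).[s], so a single s that is no root of steps_poly avoids all of them. *)
Definition generic_vec : 'rV[K]_10 := \row_a generic_scalar ^+ a.

Lemma step_coef_generic k : (1 <= k <= 8)%N -> step_coef k generic_vec != 0.
Proof.
move=> hk; have := xchooseP (exists_nat_nonroot K0 steps_poly_neq0).
rewrite -/generic_scalar /steps_poly horner_prod => /prodf_neq0 /(_ (inord k.-1) isT).
rewrite inordK; last by lia.
rewrite (_ : (k.-1).+1 = k); last by lia.
rewrite /step_poly horner_poly /step_coef.
congr (_ != 0); apply: eq_bigr => a _; by rewrite mxE inord_val mulrC.
Qed.

Fixpoint shift_vec (k : nat) : 'rV[K]_10 :=
  match k with 0 => generic_vec | 1 => ebas K 1 | k'.+1 => br c generic_vec (shift_vec k') end.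

Lemma shift_vecS k : (1 <= k)%N -> shift_vec k.+1 = br c generic_vec (shift_vec k).
Proof. by case: k. Qed.

Lemma shift_vec_vanish k : (1 <= k)%N -> vanish_below k (shift_vec k).
Proof.
elim: k => // -[_ _|k IH _].
  move=> t ht; rewrite ebas_coord (_ : (t == 1) = false) //.
  by apply/negbTE; apply/eqP => e; rewrite e in ht.
by rewrite shift_vecS //; apply: br_vanish_succ => //; apply: IH.
Qed.

Lemma shift_vec_coord k : (1 <= k <= 9)%N -> shift_vec k 0 (inord k) != 0.
Proof.
elim: k => // -[_ _|k IH hk]; first by rewrite ebas_coord inord1_10 eqxx oner_eq0.
have hk' : (1 <= k.+1 <= 8)%N by lia.
rewrite shift_vecS // (br_coord_succ _ hk' (shift_vec_vanish (ltn0Sn k))).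
by apply: mulf_neq0; [apply: IH; lia | exact: step_coef_generic].
Qed.

Definition shift_basis : 'M[K]_10 := \matrix_i shift_vec i.

Lemma shift_basis_lower (i j : 'I_10) : (j < i)%N -> shift_basis i j = 0.
Proof. by move=> hji; rewrite mxE shift_vec_vanish //; lia. Qed.

Lemma shift_basis_diag (i : 'I_10) : shift_basis i i != 0.
Proof.
rewrite mxE; case: (leqP 1 i) => hi.
  by have := @shift_vec_coord i; rewrite inord_val; apply; have := ltn_ord i; lia.
by rewrite (_ : i = 0); [rewrite /= mxE expr0 oner_eq0 | apply/val_inj => /=; lia].
Qed.

Lemma shift_basis_unit : shift_basis \in unitmx.
Proof.
rewrite unitmxE -det_tr det_trig ?unitfE.
  by apply/prodf_neq0 => i _; rewrite mxE shift_basis_diag.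
by apply/forallP => i; apply/forallP => j; apply/implyP => h; rewrite mxE shift_basis_lower.
Qed.

Lemma vanish_below_shift_inv m v : vanish_below m v -> vanish_below m (v *m invmx shift_basis).
Proof.
move=> hv; set w := v *m invmx shift_basis.
have ev : v = w *m shift_basis by rewrite /w mulmxKV // shift_basis_unit.
suff H n (t : 'I_10) : val t = n -> (t < m)%N -> w 0 t = 0 by move=> t; exact: H.
elim/ltn_ind: n t => n IH t et htm.
have := hv t htm; rewrite ev mxE (bigD1 t) //= big1 ?addr0 => [|s hs].
  by move/eqP; rewrite mulf_eq0 (negbTE (shift_basis_diag t)) orbF => /eqP.
case: (ltngtP s t) => hst.
- by rewrite (IH s) ?mul0r //; [rewrite -et | lia].
- by rewrite shift_basis_lower // mulr0.
- by move: hs; rewrite (val_inj hst) eqxx.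
Qed.

(* Induction on i through [X_{i+1}, X_j] = [X_0, [X_i, X_j]] - [X_i, X_{j+1}] (Jacobi). *)
Lemma br_shift_vec_vanish i j : (1 <= i)%N -> (1 <= j)%N ->
  vanish_below (i + j) (br c (shift_vec i) (shift_vec j)).
Proof.
elim: i j => // -[_ j _ hj|i IH j _ hj].
  by rewrite add1n; apply: br_vanish_succ; last exact: shift_vec_vanish.
rewrite shift_vecS //.
have -> : br c (br c generic_vec (shift_vec i.+1)) (shift_vec j) =
    br c generic_vec (br c (shift_vec i.+1) (shift_vec j))
  - br c (shift_vec i.+1) (br c generic_vec (shift_vec j)).
  have := jacobi c_lie generic_vec (shift_vec i.+1) (shift_vec j).
  rewrite (br_anti c_lie _ generic_vec) brNr (br_anti c_lie (br c _ _)) => /rowP J.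
  apply/rowP => t; move: (J t); rewrite !mxE => Jt.
  by apply/eqP; rewrite -subr_eq0 -oppr_eq0 -Jt; apply/eqP; ring.
apply: vanish_belowD.
  by rewrite addSn; apply: br_vanish_succ; [lia | exact: IH].
by rewrite -shift_vecS // addSnnS; apply: vanish_belowN; apply: IH; lia.
Qed.

Local Notation c2 := (rebase c shift_basis).

Hypothesis two : (2 : K) != 0.

Lemma shift_lie : is_lie c2.
Proof. exact: rebase_lie c_lie _ two shift_basis_unit. Qed.

Lemma shift_shifted : shifted c2.
Proof.
move=> i hi; rewrite /rebase !rowK -shift_vecS //.
case: ifP => hi9.
  have -> : shift_vec i.+1 = ebas K (inord i.+1) *m shift_basis by rewrite -rowE rowK inordK.
  by rewrite mulmxK // shift_basis_unit.
have -> : i.+1 = 10%N by have := ltn_ord i; lia.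
by rewrite (vanish_below10 (shift_vec_vanish _)) ?mul0mx.
Qed.

Lemma shift_weight_filtered : weight_filtered c2.
Proof.
move=> i j hi hj; rewrite /rebase !rowK.
by apply: vanish_below_shift_inv; apply: br_shift_vec_vanish.
Qed.

End ShiftBasis.

Lemma shift_basis_exists (K : fieldType) (c : sconst K) :
  is_lie c -> [pchar K] =i pred0 -> (2 : K) != 0 -> col_filtered c -> next_coord_nonzero c ->
  exists2 P, P \in unitmx &
    [/\ is_lie (rebase c P), shifted (rebase c P) & weight_filtered (rebase c P)].
Proof.
move=> c_lie K0 two c_col c_next; exists (shift_basis K0 c_next); first exact: shift_basis_unit.
by split; [exact: shift_lie | exact: shift_shifted | exact: shift_weight_filtered].
Qed.

Section Shear.
Variables (K : fieldType) (c : sconst K).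
Hypotheses (c_lie : is_lie c) (two : (2 : K) != 0).
Hypotheses (c_shift : shifted c) (c_filt : weight_filtered c).

Definition shear_coef := c (inord 1) (inord 8) 0 (inord 9).

Let N : 'M[K]_10 := delta_mx (inord 1) (inord 0).

(* Replaces X_1 by X_1 - shear_coef X_0, which kills the X_9-coefficient of [X_1, X_8]. *)
Definition shear : 'M[K]_10 := 1%:M - shear_coef *: N.

Let unshear : 'M[K]_10 := 1%:M + shear_coef *: N.

Let N2 : N *m N = 0.
Proof. by rewrite /N mul_delta_mx_cond inord_eq10. Qed.

Let shear_unshear : shear *m unshear = 1%:M.
Proof.
rewrite /shear /unshear mulmxBl !mulmxDr !mulmx1 mul1mx -!scalemxAl -!scalemxAr N2.
by rewrite !scaler0 addr0 addrK.
Qed.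

Lemma shear_unit : shear \in unitmx.
Proof. by case: (mulmx1_unit shear_unshear). Qed.

Let invmx_shear : invmx shear = unshear.
Proof. by rewrite -[RHS](mulKmx shear_unit) shear_unshear mulmx1. Qed.

Let x0_part (i : 'I_10) : K := if i == inord 1 then shear_coef else 0.

Let row_shear i : row i shear = (- x0_part i) *: ebas K 0 + ebas K i.
Proof.
apply/rowP => t; rewrite !mxE /x0_part eqxx /= eq_sym -inord0_10.
by case: (i == inord 1) => /=; ring.
Qed.

Let unshear_id (v : 'rV[K]_10) : v 0 (inord 1) = 0 -> v *m unshear = v.
Proof.
move=> h; rewrite /unshear mulmxDr mulmx1 -scalemxAr.
suff -> : v *m N = 0 by rewrite scaler0 addr0.
apply/rowP => t; rewrite !mxE big1 // => s _; rewrite mxE.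
by case: (s =P inord 1) => [->|_]; rewrite ?h ?mul0r ?andbF ?mulr0.
Qed.

Local Notation c3 := (rebase c shear).

Let c3E i j : c3 i j =
  ((- x0_part i) *: ((- x0_part j) *: c 0 0 + c 0 j) + ((- x0_part j) *: c i 0 + c i j))
    *m unshear.
Proof. by rewrite /rebase invmx_shear !row_shear brZDl !brZDr !br_ebas. Qed.

Let c0_vanish (j : 'I_10) : (1 <= j)%N -> vanish_below j.+1 (c 0 j).
Proof.
move=> hj; rewrite c_shift //; case: ifP => h9; last exact: vanish_below0.
move=> t ht; rewrite ebas_coord; case: (t =P inord j.+1) => // e.
by move: ht; rewrite e inordK ?ltnn // h9.
Qed.

Let x0_part_vanish (i j : 'I_10) : (1 <= i)%N -> (1 <= j)%N ->
  vanish_below (i + j) ((- x0_part i) *: c 0 j).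
Proof.
move=> hi hj; rewrite /x0_part; case: (i =P inord 1) => [e|_]; last first.
  by rewrite oppr0 scale0r; exact: vanish_below0.
by apply: vanish_belowZ; rewrite e inordK // add1n; exact: c0_vanish.
Qed.

Lemma shear_lie : is_lie c3.
Proof. exact: rebase_lie c_lie _ two shear_unit. Qed.

Lemma shear_shifted : shifted c3.
Proof.
move=> i hi; rewrite c3E /x0_part (_ : 0 == inord 1 = false); last by rewrite -inord0_10 inord_eq10.
rewrite oppr0 !scale0r !add0r lie_diag // scaler0 add0r unshear_id; first exact: c_shift.
by apply: (c0_vanish hi); rewrite inordK //; lia.
Qed.

Lemma shear_filtered : weight_filtered c3.
Proof.
move=> i j hi hj; rewrite c3E lie_diag // scaler0 add0r.
have hl : vanish_below (i + j) ((- x0_part i) *: c 0 j + ((- x0_part j) *: c i 0 + c i j)).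
  apply: vanish_belowD; first exact: x0_part_vanish.
  apply: vanish_belowD; last exact: c_filt.
  by rewrite lie_anti // scalerN; apply: vanish_belowN; rewrite addnC; apply: x0_part_vanish.
by rewrite unshear_id //; apply: hl; rewrite inordK //; lia.
Qed.

Lemma shear_coef18 : c3 (inord 1) (inord 8) 0 (inord 9) = 0.
Proof.
have h1 : (1 <= (inord 1 : 'I_10))%N by rewrite inordK.
have h8 : (1 <= (inord 8 : 'I_10))%N by rewrite inordK.
rewrite c3E lie_diag // scaler0 add0r /x0_part eqxx inord_eq10 // oppr0 scale0r add0r.
have hl : vanish_below 2 ((- shear_coef) *: c 0 (inord 8) + c (inord 1) (inord 8)).
  apply: vanish_belowD; last by apply: (vanish_belowW _ (c_filt h1 h8)); rewrite !inordK.
  by apply: vanish_belowZ; apply: (vanish_belowW _ (c0_vanish h8)); rewrite inordK.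
rewrite unshear_id; last by apply: hl; rewrite inordK.
by rewrite !mxE c_shift // inordK // /= ebas_coord eqxx mulr1 /shear_coef; ring.
Qed.

End Shear.

Lemma shear_exists (K : fieldType) (c : sconst K) :
  is_lie c -> (2 : K) != 0 -> shifted c -> weight_filtered c ->
  exists2 S, S \in unitmx &
    [/\ is_lie (rebase c S), shifted (rebase c S), weight_filtered (rebase c S)
       & rebase c S (inord 1) (inord 8) 0 (inord 9) = 0].
Proof.
move=> c_lie two c_shift c_filt; exists (shear c); first exact: shear_unit.
by split; [exact: shear_lie | exact: shear_shifted | exact: shear_filtered | exact: shear_coef18].
Qed.

Section AdaptedBasis.
Variables (K : fieldType) (c : sconst K).
Hypotheses (c_lie : is_lie c) (c_shift : shifted c) (c_filt : weight_filtered c).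
Hypothesis c18 : c (inord 1) (inord 8) 0 (inord 9) = 0.

(* [coef i j t] is the X_t-coordinate of [X_i, X_j]; it is 0 outside the index range, so
   that X_10 = 0 is built in. *)
Definition coef (i j t : nat) : K :=
  if [&& i < 10, j < 10 & t < 10]%N then c (inord i) (inord j) 0 (inord t) else 0.
Arguments coef : simpl never.

Lemma coef_ord (i j t : 'I_10) : coef i j t = c i j 0 t.
Proof. by rewrite /coef !ltn_ord !inord_val. Qed.

Lemma coef_diag i t : coef i i t = 0.
Proof. by rewrite /coef; case: ifP => // _; rewrite lie_diag // mxE. Qed.

Lemma coef_anti i j t : coef i j t = - coef j i t.
Proof.
rewrite /coef andbCA; case: ifP => _; last by rewrite oppr0.
by rewrite lie_anti // mxE.
Qed.

Lemma coef_out i j t : (10 <= i)%N || (10 <= j)%N || (10 <= t)%N -> coef i j t = 0.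
Proof. by rewrite /coef !ltnNge => /orP[/orP[]|] ->; rewrite ?andbF. Qed.

Lemma coef_low p q t : (1 <= p)%N -> (1 <= q)%N -> (t < p + q)%N -> coef p q t = 0.
Proof.
move=> hp hq ht; rewrite /coef; case: and3P => // -[hp10 hq10 ht10].
by apply: c_filt; rewrite ?inordK.
Qed.

Lemma br_e0_coord (v : 'rV[K]_10) t : v 0 0 = 0 -> (1 <= t <= 8)%N ->
  br c (ebas K 0) v 0 (inord t.+1) = v 0 (inord t).
Proof.
move=> v0 ht; rewrite br_ebasl_coord (bigD1 (inord t)) //= big1 ?addr0 => [|j hj].
  by rewrite c_shift inordK ?ifT ?ebas_coord ?eqxx ?mulr1 //; lia.
have [->|j0] := eqVneq j 0; first by rewrite v0 mul0r.
rewrite c_shift ?lt0n //; case: ifP => hj9; last by rewrite mxE mulr0.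
rewrite ebas_coord; case: eqP => [e|_]; last by rewrite mulr0.
move/(congr1 (@nat_of_ord 10)): e; rewrite !inordK //; try lia.
by move=> [ej]; case/eqP: hj; apply/val_inj; rewrite /= inordK ?ej //; lia.
Qed.

Lemma br_c0_coord (x k : 'I_10) t : (1 <= k)%N -> (t < 10)%N ->
  br c (ebas K x) (c 0 k) 0 (inord t) = coef x k.+1 t.
Proof.
move=> hk ht; rewrite c_shift //; case: ifP => hk9.
  by rewrite br_ebas /coef ltn_ord ltnS hk9 ht inord_val.
by rewrite br0r mxE coef_out //; lia.
Qed.

(* Jacobi with X_0: ad X_0 is a derivation acting as the shift X_k |-> X_{k+1}. *)
Lemma coef_shift i j t : (1 <= i)%N -> (1 <= j)%N -> (1 <= t <= 8)%N ->
  coef i j t = coef i.+1 j t.+1 + coef i j.+1 t.+1.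
Proof.
move=> hi hj ht.
have [hi10|hi10] := leqP 10 i; first by rewrite !coef_out ?hi10 ?addr0 //; lia.
have [hj10|hj10] := leqP 10 j; first by rewrite !coef_out ?hj10 ?addr0 ?orbT //; lia.
have := congr1 (fun v : 'rV[K]_10 => v 0 (inord t.+1))
  (jacobi c_lie (ebas K 0) (ebas K (inord i)) (ebas K (inord j))).
rewrite !mxE !br_ebas br_e0_coord //; last by apply: c_filt; rewrite ?inordK // addn_gt0 hi.
rewrite (lie_anti c_lie (inord j) 0) brNr mxE !br_c0_coord ?inordK //; try lia.
have -> : c (inord i) (inord j) 0 (inord t) = coef i j t by rewrite /coef hi10 hj10 ifT //; lia.
by rewrite (coef_anti j) => jac; apply/eqP; rewrite -subr_eq0 -jac; apply/eqP; ring.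
Qed.

(* [coef p q 9] in a form that reduces on numerals to 0 or to +-[coef p' q' 9], p' < q'. *)
Definition top_coef (p q : nat) : K :=
  if [|| p == q, (9 < p + q)%N, (p, q) == (1, 8)%N | (p, q) == (8, 1)%N] then 0
  else if (p < q)%N then coef p q 9 else - coef q p 9.

Lemma coef_top p q : (1 <= p)%N -> (1 <= q)%N -> coef p q 9 = top_coef p q.
Proof.
move=> hp hq; rewrite /top_coef.
have [->|npq] := eqVneq p q; first exact: coef_diag.
have [|small] := ltnP 9 (p + q); first exact: coef_low.
have c189 : coef 1 8 9 = 0 by rewrite /coef /= c18.
have [[-> ->]|_] := eqVneq (p, q) (1, 8)%N; first exact: c189.
have [[-> ->]|_] := eqVneq (p, q) (8, 1)%N; first by rewrite coef_anti c189 oppr0.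
by case: ltnP => // _; rewrite coef_anti.
Qed.

(* [spread n p q = \sum_k 'C(n, k) top_coef (p + k) (q + n - k)]: n steps of coef_shift. *)
Fixpoint spread (n p q : nat) : K :=
  if n is n'.+1 then spread n' p.+1 q + spread n' p q.+1 else top_coef p q.

Lemma coef_spread n p q : (1 <= p)%N -> (1 <= q)%N -> (n <= 8)%N ->
  coef p q (9 - n) = spread n p q.
Proof.
elim: n p q => [|n IH] p q hp hq hn /=; first exact: coef_top.
rewrite -!IH //; try lia.
have -> : (9 - n = (9 - n.+1).+1)%N by lia.
by apply: coef_shift => //; lia.
Qed.

Definition coef_formula_lt (p q t : nat) : K :=
  if p == 0%N then ((t == q.+1) && (q < 9)%N)%:R
  else if (t < p + q)%N then 0 else spread (9 - t) p q.

Definition coef_formula (p q t : nat) : K :=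
  if p == q then 0 else if (p < q)%N then coef_formula_lt p q t else - coef_formula_lt q p t.

Lemma coef_formula_ltE p q t : (p < q < 10)%N -> (t < 10)%N -> coef p q t = coef_formula_lt p q t.
Proof.
move=> /andP[hpq hq] ht; rewrite /coef_formula_lt.
case: eqP => [p0|/eqP p0].
  have q0 : (0 < (inord q : 'I_10))%N by rewrite inordK //; lia.
  rewrite p0 /coef hq ht /= inord0_10 c_shift // inordK //.
  case: ifP => hq9; last by rewrite mxE andbF.
  by rewrite ebas_coord andbT inord_eq10.
case: ltnP => htpq; first by apply: coef_low; lia.
by rewrite -coef_spread ?subKn //; lia.
Qed.

Lemma coef_formulaE p q t : (p < 10)%N -> (q < 10)%N -> (t < 10)%N ->
  coef p q t = coef_formula p q t.
Proof.
move=> hp hq ht; rewrite /coef_formula.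
have [->|npq] := eqVneq p q; first exact: coef_diag.
case: ltnP => hpq; first by apply: coef_formula_ltE; lia.
by rewrite coef_anti coef_formula_ltE //; lia.
Qed.

Lemma coef_jacobi i j k t : (i < 10)%N -> (j < 10)%N -> (k < 10)%N -> (t < 10)%N ->
  \sum_(0 <= m < 10)
    (coef j k m * coef i m t + coef k i m * coef j m t + coef i j m * coef k m t) = 0.
Proof.
move=> hi hj hk ht.
have := congr1 (fun v : 'rV[K]_10 => v 0 (inord t))
  (jacobi c_lie (ebas K (inord i)) (ebas K (inord j)) (ebas K (inord k))).
rewrite !mxE !br_ebas !br_ebasl_coord -!big_split /= => jac; rewrite -[RHS]jac big_mkord.
by apply: eq_bigr => m _; rewrite /coef hi hj hk ht ltn_ord /= !inord_val.
Qed.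

Local Ltac unfold_coefs :=
  rewrite ?coef_formulaE // /coef_formula /coef_formula_lt /= /top_coef /=.

Hypotheses (two : (2 : K) != 0) (three : (3 : K) != 0).

Lemma coef235 : coef 2 3 5 = 0.
Proof.
have : (- 2) * coef 2 3 5 ^+ 2 = 0.
  by rewrite -(@coef_jacobi 1 2 3 6) // unlock /=; unfold_coefs; ring.
by move/eqP; rewrite mulf_eq0 oppr_eq0 (negbTE two) expf_eq0 /= => /eqP.
Qed.

(* With x, y, z the X_9-coefficients of [X_2, X_7], [X_3, X_6], [X_4, X_5]:
   coef 2 3 5 = x + 3y + 2z and coef 2 5 7 = x + 2y + z. *)
Lemma coef257 : coef 2 5 7 = 0.
Proof.
have x_eq : coef 2 7 9 = - (3 * coef 3 6 9 + 2 * coef 4 5 9).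
  apply/eqP; rewrite -subr_eq0 -[X in _ == X]coef235; apply/eqP.
  by unfold_coefs; ring.
have : 3 * coef 2 5 7 ^+ 2 = 0.
  by rewrite -(@coef_jacobi 1 3 4 8) // unlock /=; unfold_coefs; rewrite x_eq; ring.
by move/eqP; rewrite mulf_eq0 (negbTE three) expf_eq0 /= => /eqP.
Qed.

Lemma coef369 : coef 3 6 9 = - coef 2 7 9.
Proof.
apply/eqP; rewrite -subr_eq0 -[X in _ == X](_ : 2 * coef 2 5 7 - coef 2 3 5 = 0).
  by apply/eqP; unfold_coefs; ring.
by rewrite coef235 coef257; ring.
Qed.

Lemma coef459 : coef 4 5 9 = coef 2 7 9.
Proof.
apply/eqP; rewrite -subr_eq0 -[X in _ == X](_ : 2 * coef 2 3 5 - 3 * coef 2 5 7 = 0).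
  by apply/eqP; unfold_coefs; ring.
by rewrite coef235 coef257; ring.
Qed.

Definition f10_param (n : nat) : K :=
  match n with
  | 1 => coef 2 7 9 | 2 => coef 1 7 9 | 4 => coef 2 6 9 | 5 => coef 1 6 9
  | 7 => coef 3 5 9 | 8 => coef 2 5 9 | 9 => coef 1 5 9 | 10 => coef 3 4 9
  | 11 => coef 2 4 9 | 12 => coef 1 4 9 | 13 => coef 2 3 9 | 14 => coef 1 3 9
  | 15 => coef 1 2 9 | _ => 0%R
  end%N.

Local Notation a := f10_param.

Lemma f10_param_rel1 : a 1 * (2 * a 2 + 7 * a 4 + 7 * a 7) = 0.
Proof.
apply/eqP; rewrite -oppr_eq0; apply/eqP.
rewrite -(@coef_jacobi 1 2 5 9) // unlock /= /f10_param; unfold_coefs.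
by rewrite coef369 coef459; ring.
Qed.

Lemma f10_param_rel2 : 3 * a 4 ^+ 2 + 3 * a 4 * a 7 - 2 * a 2 * a 7 = 0.
Proof.
apply/eqP; rewrite -oppr_eq0; apply/eqP.
rewrite -(@coef_jacobi 1 2 3 8) // unlock /= /f10_param; unfold_coefs.
by rewrite coef369 coef459; ring.
Qed.

Lemma f10_param_rel3 : a 1 * (2 * a 9 + 5 * a 11) - 2 * a 2 * a 10
  + a 4 * (7 * a 8 - 2 * a 10) + a 7 * (- 3 * a 5 + 2 * a 8 - 7 * a 10) = 0.
Proof.
apply/eqP; rewrite -oppr_eq0; apply/eqP.
rewrite -(@coef_jacobi 1 2 3 9) // unlock /= /f10_param; unfold_coefs.
by rewrite coef369 coef459; ring.
Qed.

Lemma adapted_F10 (i j : 'I_10) : (i < j)%N -> c i j = F10 a i j.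
Proof.
move=> hij; apply/rowP => t; rewrite -coef_ord coef_formulaE //.
case: i j t hij => [[|[|[|[|[|[|[|[|[|[|//]]]]]]]]]] hi] [[|[|[|[|[|[|[|[|[|[|//]]]]]]]]]] hj]
  [[|[|[|[|[|[|[|[|[|[|//]]]]]]]]]] ht] //= _.
all: rewrite /coef_formula /coef_formula_lt /F10 /= ?natn ?mxE ?eq_inord10 //= /top_coef /=.
all: by rewrite ?coef369 ?coef459; ring.
Qed.

Lemma adapted_F10_exists : exists a : nat -> K,
  (forall i j : 'I_10, (i < j)%N -> c i j = F10 a i j) /\
  a 1%N * (2 * a 2%N + 7 * a 4%N + 7 * a 7%N) = 0 /\
  3 * a 4%N ^+ 2 + 3 * a 4%N * a 7%N - 2 * a 2%N * a 7%N = 0 /\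
  a 1%N * (2 * a 9%N + 5 * a 11%N) - 2 * a 2%N * a 10%N + a 4%N * (7 * a 8%N - 2 * a 10%N)
    + a 7%N * (- 3 * a 5%N + 2 * a 8%N - 7 * a 10%N) = 0.
Proof.
exists f10_param; split; first exact: adapted_F10.
by split; [exact: f10_param_rel1 | split; [exact: f10_param_rel2 | exact: f10_param_rel3]].
Qed.

End AdaptedBasis.

Theorem proposition28 (K : closedFieldType) (hK : [pchar K] =i pred0)
    (c : sconst K) (hlie : is_lie c) (hfil : filiform10 c) :
  exists (P : 'M[K]_10) (a : nat -> K),
    P \in unitmx /\
    (forall i j : 'I_10, (i < j)%N -> br c (row i P) (row j P) = F10 a i j *m P) /\
    a 1%N * (2 * a 2%N + 7 * a 4%N + 7 * a 7%N) = 0 /\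
    3 * a 4%N ^+ 2 + 3 * a 4%N * a 7%N - 2 * a 2%N * a 7%N = 0 /\
    a 1%N * (2 * a 9%N + 5 * a 11%N) - 2 * a 2%N * a 10%N + a 4%N * (7 * a 8%N - 2 * a 10%N)
      + a 7%N * (- 3 * a 5%N + 2 * a 8%N - 7 * a 10%N) = 0.
Proof.
have two : (2 : K) != 0 by rewrite ((pcharf0P _).1 hK).
have three : (3 : K) != 0 by rewrite ((pcharf0P _).1 hK).
have [Q uQ [lie1 col1 next1]] := graded_basis_exists hlie hfil two.
have [P uP [lie2 shift2 filt2]] := shift_basis_exists lie1 hK two col1 next1.
have [S uS [lie3 shift3 filt3 k18]] := shear_exists lie2 two shift2 filt2.
have [a [hF10 rels]] := adapted_F10_exists lie3 shift3 filt3 k18 two three.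
exists (S *m P *m Q), a; split; first by rewrite !unitmx_mul uS uP uQ.
split=> // i j hij.
by rewrite !br_rebase_row // rebaseK // hF10 // -!mulmxA.
Qed.
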